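(* Let $P$ be a finite poset and $I\in\mathcal{IC}(P)$. Then \[ \mathrm{Row}(I)=\mathrm{Inc}(I)\ \cup\ \Big(\Delta\big(\mathrm{Inc}_I(\lceil I\rceil)\big)-\big(I\cup\Delta(\lceil I\rceil)\big)\Big)\ \cup\ \Big(\Delta(\lceil I\rceil)-\Delta\big(\mathrm{Min}(I)\cap\Delta(\lceil I\rceil)\big)\Big). \]
   Context: All posets are finite. For a poset $P$, a subset $I\subseteq P$ is interval-closed if for all $x,y\in I$ and $z\in P$ with $x\le z\le y$ we have $z\in I$; $\mathcal{IC}(P)$ is the set of interval-closed subsets of $P$. For $x\in P$ the toggle $t_x:\mathcal{IC}(P)\to\mathcal{IC}(P)$ is defined by $t_x(I)=I\triangle\{x\}$ if $I\triangle\{x\}\in\mathcal{IC}(P)$ and $t_x(I)=I$ otherwise. Rowmotion is $\mathrm{Row}=t_{x_1}\circ t_{x_2}\circ\cdots\circ t_{x_N}:\mathcal{IC}(P)\to\mathcal{IC}(P)$, where $(x_1,\dots,x_N)$ is a linear extension of $P$ (so elements are toggled from the top of the poset down); this does not depend on the choice of linear extension. For $S\subseteq P$: $\Delta(S)$ is the smallest order ideal containing $S$ and $\nabla(S)$ the smallest order filter containing $S$ (both empty if $S=\emptyset$); $\mathrm{Inc}(S)=P-(\Delta(S)\cup\nabla(S))$ is the set of elements incomparable to every element of $S$; for $J\subseteq P$, $\mathrm{Inc}_J(S)=J\cap\mathrm{Inc}(S)$. $\mathrm{Min}(S)$ denotes the set of minimal elements of $S$ (in the induced order). The ceiling of $I\in\mathcal{IC}(P)$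 is $\lceil I\rceil=\mathrm{Min}(\nabla(I)-I)$. Set differences are written with $-$. *)

From mathcomp Require Import all_boot all_order.
Set Implicit Arguments. Unset Strict Implicit. Unset Printing Implicit Defensive.
Import Order.TTheory.
Local Open Scope order_scope.

Section Defs.
Context {d : Order.disp_t} {P : finPOrderType d}.

Definition interval_closed (I : {set P}) : bool :=
  [forall x in I, forall y in I, forall z, ((x <= z) && (z <= y)) ==> (z \in I)].

Definition symdiff1 (I : {set P}) (x : P) : {set P} :=
  if x \in I then I :\ x else x |: I.

Definition toggle (x : P) (I : {set P}) : {set P} :=
  if interval_closed (symdiff1 I x) then symdiff1 I x else I.

Definition linext (s : seq P) : Prop :=
  perm_eq s (enum P) /\ forall x y : P, x < y -> (index x s < index y s)%N.

Definition Row (s : seq P) (I : {set P}) : {set P} := foldr toggle I s.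

Definition down (S : {set P}) : {set P} := [set y | [exists x in S, y <= x]].
Definition up (S : {set P}) : {set P} := [set y | [exists x in S, x <= y]].
Definition Inc (S : {set P}) : {set P} := ~: (down S :|: up S).
Definition IncIn (J S : {set P}) : {set P} := J :&: Inc S.
Definition Min (S : {set P}) : {set P} := [set x in S | [forall y in S, ~~ (y < x)]].
Definition ceil (I : {set P}) : {set P} := Min (up I :\: I).

End Defs.

From mathcomp Require Import all_boot all_order.
Set Implicit Arguments. Unset Strict Implicit. Unset Printing Implicit Defensive.
Import Order.TTheory.
Local Open Scope order_scope.

(* Toggling x changes the membership of x only, and whether it does depends
   only on the elements strictly below and strictly above x.  Since Row toggles
   along a linear extension from the top down, at the moment x is toggled the
   elements above x already carry their final values (those of Row I) while
   the elements below x still carry their values in I.  Hence Row I is the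
   unique set J satisfying, at every x, the "toggle rule" relating x \in J to
   I below x and to J above x (Row_toggle_rule). *)

Section Toggles.
Context {d : Order.disp_t} {P : finPOrderType d}.
Implicit Types (S T U I J : {set P}) (a b x y z : P).

Lemma downP S y : reflect (exists2 x, x \in S & y <= x) (y \in down S).
Proof.
rewrite /down in_set; apply: (iffP existsP) => [[x /andP[]]|[x Sx yx]]; first by exists x.
by exists x; rewrite Sx.
Qed.

Lemma upP S y : reflect (exists2 x, x \in S & x <= y) (y \in up S).
Proof.
rewrite /up in_set; apply: (iffP existsP) => [[x /andP[]]|[x Sx xy]]; first by exists x.
by exists x; rewrite Sx.
Qed.

Lemma mem_down S x : x \in S -> x \in down S.
Proof. by move=> Sx; apply/downP; exists x. Qed.

Lemma mem_up S x : x \in S -> x \in up S.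
Proof. by move=> Sx; apply/upP; exists x. Qed.

Lemma down_le S x y : x \in down S -> y <= x -> y \in down S.
Proof. by move=> /downP[z Sz xz] yx; apply/downP; exists z; last exact: le_trans xz. Qed.

Lemma up_ge S x y : x \in up S -> x <= y -> y \in up S.
Proof. by move=> /upP[z Sz zx] xy; apply/upP; exists z; last exact: le_trans xy. Qed.

Lemma down_sub S T y : S \subset T -> y \in down S -> y \in down T.
Proof. by move=> /subsetP ST /downP[x /ST Tx yx]; apply/downP; exists x. Qed.

Lemma MinP S x : reflect (x \in S /\ forall y, y \in S -> ~~ (y < x)) (x \in Min S).
Proof.
rewrite /Min in_set; apply: (iffP andP) => [[Sx /forallP H]|[Sx H]].
  by split=> // y Sy; exact: implyP (H y) Sy.
by split=> //; apply/forallP => y; apply/implyP; exact: H.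
Qed.

Lemma Min_sub S : Min S \subset S.
Proof. by apply/subsetP => x /MinP[]. Qed.

(* An element of T lies below a minimal element of T only if it is that
   element. *)
Lemma mem_down_Min T S y : y \in T -> (y \in down (Min T :&: S)) = (y \in Min T :&: S).
Proof.
move=> Ty; apply/idP/idP => [/downP[m MSm ym]|/mem_down //].
move: (MSm); rewrite in_setI => /andP[/MinP[_ minm] _].
move: ym; rewrite le_eqVlt => /orP[/eqP->//|ym].
by rewrite (negbTE (minm y Ty)) in ym.
Qed.

Lemma interval_closedP T :
  reflect (forall a b z, a \in T -> b \in T -> a <= z -> z <= b -> z \in T)
          (interval_closed T).
Proof.
apply: (iffP forallP) => [H a b z Ta Tb az zb | H a].
  move/implyP: (H a) => /(_ Ta) /forallP /(_ b) /implyP /(_ Tb) /forallP /(_ z).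
  by rewrite az zb.
apply/implyP => Ta; apply/forallP => b; apply/implyP => Tb; apply/forallP => z.
by apply/implyP => /andP[]; exact: H.
Qed.

Lemma in_toggle T x y :
  (y \in toggle x T) = if y == x then (x \in T) (+) interval_closed (symdiff1 T x)
                       else y \in T.
Proof.
rewrite /toggle /symdiff1; case: ifP => IC; case: eqVneq => [->|yx] //=;
  by case: (x \in T); rewrite ?in_setD1 ?in_setU1 ?eqxx ?(negbTE yx).
Qed.

Lemma toggle_closed T x : interval_closed T -> interval_closed (toggle x T).
Proof. by rewrite /toggle; case: ifP. Qed.

Lemma interval_closedD1 T x : interval_closed T ->
  interval_closed (T :\ x) = ~~ [exists a, exists b, [&& a \in T, b \in T, a < x & x < b]].
Proof.
move=> /interval_closedP convT; apply/idP/idP.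
- move=> /interval_closedP convTx; apply/negP => /existsP[a /existsP[b /and4P[Ta Tb ax xb]]].
  suff: x \in T :\ x by rewrite in_setD1 eqxx.
  apply: (convTx a b); rewrite ?ltW // !in_setD1 ?Ta ?Tb andbT.
    by rewrite (lt_eqF ax).
  by rewrite (gt_eqF xb).
- move=> /existsPn noab; apply/interval_closedP => a b z.
  rewrite !in_setD1 => /andP[ax Ta] /andP[bx Tb] az zb.
  rewrite (convT a b z) // andbT; apply: contraTneq isT => zx; subst z.
  move: (noab a) => /existsPn /(_ b); rewrite Ta Tb /=.
  by rewrite !lt_def az zb eq_sym ax bx.
Qed.

Definition closed_below T x : Prop := forall a z, a \in T -> a < z -> z < x -> z \in T.
Definition closed_above T x : Prop := forall b z, b \in T -> x < z -> z < b -> z \in T.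

Lemma closed_below_agree T U x : (forall y, y < x -> (y \in T) = (y \in U)) ->
  closed_below T x -> closed_below U x.
Proof.
move=> agree closedT a z Ua az zx; rewrite -agree //.
by apply: (closedT a) => //; rewrite agree // (lt_trans az zx).
Qed.

Lemma closed_above_agree T U x : (forall y, x < y -> (y \in T) = (y \in U)) ->
  closed_above T x -> closed_above U x.
Proof.
move=> agree closedT b z Ub xz zb; rewrite -agree //.
by apply: (closedT b) => //; rewrite agree // (lt_trans xz zb).
Qed.

Lemma interval_closedU1 T x : interval_closed T ->
  interval_closed (x |: T) <-> closed_below T x /\ closed_above T x.
Proof.
move=> /interval_closedP convT; split.
- move=> /interval_closedP convTx; split.
  + move=> a z Ta az zx.
    have : z \in x |: T by apply: (convTx a x); rewrite ?in_setU1 ?eqxx ?Ta ?orbT ?ltW.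
    by rewrite in_setU1 (lt_eqF zx).
  + move=> b z Tb xz zb.
    have : z \in x |: T by apply: (convTx x b); rewrite ?in_setU1 ?eqxx ?Tb ?orbT ?ltW.
    by rewrite in_setU1 (gt_eqF xz).
- move=> [below above]; apply/interval_closedP => a b z; rewrite !in_setU1.
  case: (eqVneq z x) => [-> //|zx] /=.
  move=> /orP[/eqP->|Ta] /orP[/eqP->|Tb] az zb.
  + by case/eqP: zx; apply: le_anti; rewrite zb az.
  + move: zb; rewrite le_eqVlt => /orP[/eqP->//|zb].
    by apply: (above b) => //; rewrite lt_def zx.
  + move: az; rewrite le_eqVlt => /orP[/eqP<-//|az].
    by apply: (below a) => //; rewrite lt_def eq_sym zx.
  + exact: (convT a b).
Qed.

(* The local rule that Row I = J must satisfy at x: whether x \in J is what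
   toggling x produces when the elements below x are as in I and those above
   x are as in J. *)
Definition toggle_rule I J x : Prop :=
  (x \in I -> (x \in J) = [exists a, exists b, [&& a \in I, a < x, b \in J & x < b]]) /\
  (x \notin I -> x \in J <-> closed_below I x /\ closed_above J x).

(* One toggle of the top-down sweep: if T agrees with J above x and with I
   below and at x, toggling x makes T agree with J at x as well. *)
Lemma toggle_step I J T x : interval_closed T -> toggle_rule I J x ->
  (forall y, x < y -> (y \in T) = (y \in J)) ->
  (forall y, y < x -> (y \in T) = (y \in I)) ->
  (x \in T) = (x \in I) ->
  toggle x T = [set y | if y == x then y \in J else y \in T].
Proof.
move=> convT [rule_in rule_out] above below Tx.
apply/setP => y; rewrite in_toggle in_set; case: eqVneq => [->|//].
rewrite /symdiff1 Tx; case: (boolP (x \in I)) => Ix.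
- rewrite interval_closedD1 // addTb negbK rule_in //.
  apply: eq_existsb => a; apply: eq_existsb => b.
  case: (boolP (a < x)) => ax; case: (boolP (x < b)) => xb; rewrite ?andbF ?andFb //.
  by rewrite (below _ ax) (above _ xb) !andbT.
- rewrite addFb; apply/idP/idP => [/(interval_closedU1 x convT)|/(rule_out Ix)] [cb ca].
    apply/(rule_out Ix); split; first exact: closed_below_agree below cb.
    exact: closed_above_agree above ca.
  apply/(interval_closedU1 x convT); split.
    exact: closed_below_agree (fun y yx => esym (below y yx)) cb.
  exact: closed_above_agree (fun y xy => esym (above y xy)) ca.
Qed.

Lemma linext_split s p x t : linext s -> s = p ++ x :: t ->
  [/\ x \notin t, forall y, x < y -> y \in t & forall y, y < x -> y \notin t].
Proof.
move=> [perm_s idx_s] def_s.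
have uniq_s : uniq s by rewrite (perm_uniq perm_s) enum_uniq.
have mem_s y : y \in s by rewrite (perm_mem perm_s) mem_enum.
move: (uniq_s); rewrite def_s cat_uniq cons_uniq => /and3P[_ disj_p /andP[xt _]].
have notin_p y : y \in x :: t -> y \notin p.
  by move=> yxt; apply: contra disj_p => yp; apply/hasP; exists y.
have index_in_t y : y \in t -> (size p < index y s)%N.
  move=> yt; rewrite def_s index_cat (negbTE (notin_p y _)) ?inE ?yt ?orbT //=.
  have /negbTE-> : x != y by apply: contraNneq xt => ->.
  by rewrite addnS ltnS leq_addr.
have index_x : index x s = size p.
  by rewrite def_s index_cat (negbTE (notin_p x (mem_head _ _))) /= eqxx addn0.
split=> // y; last first.
  move=> yx; apply: contraTN (idx_s _ _ yx) => /index_in_t.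
  by rewrite index_x -leqNgt => /ltnW.
move=> xy; have := idx_s _ _ xy; rewrite index_x.
move: (mem_s y); rewrite def_s mem_cat inE => /or3P[yp|/eqP yx|//].
  rewrite index_cat yp => /ltn_trans /(_ (etrans (index_mem y p) yp)).
  by rewrite ltnn.
by rewrite yx ltxx in xy.
Qed.

Lemma foldr_toggle_closed I t : interval_closed I -> interval_closed (foldr toggle I t).
Proof. by move=> convI; elim: t => //= x t; exact: toggle_closed. Qed.

(* By induction on the suffixes of s, toggling
   the suffix t produces J on t and leaves I elsewhere. *)
Theorem Row_toggle_rule s I J : linext s -> interval_closed I ->
  (forall x, toggle_rule I J x) -> Row s I = J.
Proof.
move=> ext_s convI rule.
suff partial t p : s = p ++ t ->
    foldr toggle I t = [set y | if y \in t then y \in J else y \in I].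
  apply/setP => y; rewrite /Row (partial s [::]) // in_set.
  by case: ext_s => perm_s _; rewrite (perm_mem perm_s) mem_enum.
elim: t p => [|x t IHt] p def_s /=; first by apply/setP => y; rewrite in_set.
have [xt above below] := linext_split ext_s def_s.
rewrite -cat_rcons in def_s; have def_T := IHt _ def_s.
rewrite (toggle_step (foldr_toggle_closed t convI) (rule x)) def_T.
- by apply/setP => y; rewrite !in_set inE; case: eqVneq.
- by move=> y xy; rewrite in_set above.
- by move=> y yx; rewrite in_set (negbTE (below y yx)).
- by rewrite in_set (negbTE xt).
Qed.

End Toggles.

Section RowImage.
Context {d : Order.disp_t} {P : finPOrderType d}.
Implicit Types (I : {set P}) (a b c m x y z : P).

Definition row_image I : {set P} := [set y |
  if y \in I then (y \in down (ceil I)) && (y \notin Min I)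
  else if y \in up I then y \in ceil I
  else if y \in down I then y \notin down (Min I :&: down (ceil I))
  else true].

Lemma in_row_image I y : (y \in row_image I) =
  if y \in I then (y \in down (ceil I)) && (y \notin Min I)
  else if y \in up I then y \in ceil I
  else if y \in down I then y \notin down (Min I :&: down (ceil I))
  else true.
Proof. by rewrite in_set. Qed.

Lemma ceilP I c : reflect
  [/\ c \in up I, c \notin I & forall y, y \in up I -> y \notin I -> ~~ (y < c)]
  (c \in ceil I).
Proof.
apply: (iffP (MinP _ _)) => [[]|[Uc Ic minc]].
  rewrite in_setD => /andP[Ic Uc] minc; split=> // y Uy Iy.
  by apply: minc; rewrite in_setD Iy.
by split=> [|y]; rewrite in_setD ?Ic ?Uc // => /andP[Iy Uy]; exact: minc.
Qed.

Variable I : {set P}.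
Hypothesis convI : interval_closed I.

Lemma up_down_closed y : y \in up I -> y \in down I -> y \in I.
Proof. by move=> /upP[a Ia ay] /downP[b Ib yb]; exact: (interval_closedP _ convI a b). Qed.

Local Notation J := (row_image I).

Lemma ceil_in_row_image c : c \in ceil I -> c \in J.
Proof. by move=> Cc; case/ceilP: (Cc) => Uc Ic _; rewrite in_row_image (negbTE Ic) Uc. Qed.

Lemma row_image_up_below_ceil b : b \in J -> b \in up I -> b \in down (ceil I).
Proof.
rewrite in_row_image; case: ifP => [_ /andP[//]|Ib]; move=> + Ub; rewrite Ub.
exact: mem_down.
Qed.

Lemma row_image_not_above_gap z b : z \in up I -> z \notin I -> b \in J -> ~~ (z < b).
Proof.
move=> Uz Iz Jb; apply/negP => zb; have Ub := up_ge Uz (ltW zb).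
have [Ib|Ib] := boolP (b \in I).
  by case/upP: Uz => a Ia az; rewrite (interval_closedP _ convI a b z) ?(ltW zb) in Iz.
move: Jb; rewrite in_row_image (negbTE Ib) Ub => /ceilP[_ _ minb].
by rewrite (negbTE (minb z Uz Iz)) in zb.
Qed.

Lemma row_image_rule_in x : x \in I ->
  (x \in J) = [exists a, exists b, [&& a \in I, a < x, b \in J & x < b]].
Proof.
move=> Ix; rewrite in_row_image Ix; apply/idP/idP.
- move=> /andP[/downP[c Cc xc] notMx]; case/ceilP: (Cc) => _ Ic _.
  have [a Ia ax] : exists2 a, a \in I & a < x.
    apply/exists_inP; apply: contraNT notMx => /exists_inPn noa.
    by apply/MinP; split=> // a /noa; rewrite negbK.
  apply/existsP; exists a; apply/existsP; exists c.
  by rewrite Ia ax ceil_in_row_image // lt_def xc andbT; apply: contraNneq Ic => ->.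
- move=> /existsP[a /existsP[b /and4P[Ia ax Jb xb]]]; apply/andP; split.
  + have Ub : b \in up I by apply: up_ge (mem_up Ix) (ltW xb).
    exact: down_le (row_image_up_below_ceil Jb Ub) (ltW xb).
  + by apply/MinP => -[_ /(_ a Ia)]; rewrite ax.
Qed.

Lemma row_image_rule_gap x : x \in up I -> x \notin I ->
  x \in ceil I <-> closed_below I x /\ closed_above J x.
Proof.
move=> Ux Ix; split.
- move=> /ceilP[_ _ minx]; split=> [a z Ia az zx | b z Jb xz zb].
    apply: contraTT zx => Iz; apply: minx Iz; exact: up_ge (mem_up Ia) (ltW az).
  by have := row_image_not_above_gap Ux Ix Jb; rewrite (lt_trans xz zb).
- move=> [closedI _]; apply/ceilP; split=> // y /upP[a Ia] + Iy.
  rewrite le_eqVlt => /orP[/eqP ay|ay]; first by move: Iy; rewrite -ay Ia.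
  by apply: contraNN Iy; exact: closedI ay.
Qed.

(* Outside up I no element of I is below x, so closedness below x is void. *)
Lemma closed_below_outside_up x : x \notin up I -> closed_below I x.
Proof.
move=> Ux a z Ia az zx; case/negP: Ux.
exact: up_ge (mem_up Ia) (ltW (lt_trans az zx)).
Qed.

Lemma row_image_rule_down x : x \notin up I -> x \in down I ->
  x \notin down (Min I :&: down (ceil I)) <-> closed_above J x.
Proof.
move=> Ux Dx; split.
- move=> notMx b z Jb xz zb; rewrite in_row_image.
  have [Iz|Iz] := boolP (z \in I).
    have Cz : z \in down (ceil I).
      exact: down_le (row_image_up_below_ceil Jb (up_ge (mem_up Iz) (ltW zb))) (ltW zb).
    rewrite Cz; apply: contra notMx => Mz; apply/downP; exists z; last exact: ltW.
    by rewrite in_setI Mz.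
  case: ifP => [Uz'|_]; first by case/negP: (row_image_not_above_gap Uz' Iz Jb).
  by case: ifP => // Dz; apply: contra notMx => /down_le; apply; exact: ltW.
- move=> closedJ; apply/negP => /downP[m]; rewrite in_setI => /andP[Mm /downP[c Cc mc]] xm.
  have [[Im _] [_ Ic _]] := (MinP _ _ Mm, ceilP _ _ Cc).
  have xm' : x < m by rewrite lt_def xm andbT; apply: contraNneq Ux => <-; exact: mem_up.
  have mc' : m < c by rewrite lt_def mc andbT; apply: contraNneq Ic => ->.
  by have := closedJ c m (ceil_in_row_image Cc) xm' mc'; rewrite in_row_image Im Mm andbF.
Qed.

Lemma row_image_rule_incomparable x : x \notin up I -> x \notin down I -> closed_above J x.
Proof.
move=> Ux Dx b z Jb xz zb; have Dz : z \notin down I.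
  by apply: contra Dx => /down_le; apply; exact: ltW.
have Iz : z \notin I by apply: contra Dz; exact: mem_down.
rewrite in_row_image (negbTE Iz) (negbTE Dz).
by case: ifP => // Uz; case/negP: (row_image_not_above_gap Uz Iz Jb).
Qed.

Lemma row_image_toggle_rule x : toggle_rule I J x.
Proof.
split; first exact: row_image_rule_in.
move=> Ix; rewrite in_row_image (negbTE Ix).
case: ifP => [Ux|/negbT Ux]; first exact: row_image_rule_gap.
have closedI := closed_below_outside_up Ux.
case: ifP => [Dx|/negbT Dx].
  have [to_above of_above] := row_image_rule_down Ux Dx.
  by split=> [/to_above|[_ /of_above]].
by split=> // _; split=> //; exact: row_image_rule_incomparable.
Qed.

(* By convexity, no element of the ceiling lies below an element of I. *)
Lemma ceil_not_below_I c i : c \in ceil I -> i \in I -> ~~ (c <= i).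
Proof.
move=> /ceilP[Uc Ic _] Ii; apply: contra Ic => ci.
exact: up_down_closed Uc (down_le (mem_down Ii) ci).
Qed.

Lemma down_ceil_gap y : y \in up I -> y \notin I -> (y \in down (ceil I)) = (y \in ceil I).
Proof.
move=> Uy Iy; apply/idP/idP => [/downP[c Cc]|/mem_down //].
rewrite le_eqVlt => /orP[/eqP->//|yc].
by case/ceilP: Cc => _ _ /(_ y Uy Iy); rewrite yc.
Qed.

Lemma row_image_formula :
  Inc I
  :|: (down (IncIn I (ceil I)) :\: (I :|: down (ceil I)))
  :|: (down (ceil I) :\: down (Min I :&: down (ceil I))) = J.
Proof.
apply/setP => y; rewrite in_row_image /Inc /IncIn !(in_setU, in_setD, in_setC, in_setI).
have [Iy|Iy] := boolP (y \in I).
  rewrite (mem_down Iy) mem_down_Min // in_setI /=.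
  by case: (y \in Min I); case: (y \in down (ceil I)).
have [Uy|Uy] := boolP (y \in up I).
  have notDy : y \notin down I by apply: contra Iy; exact: up_down_closed.
  have notDM : y \notin down (Min I :&: down (ceil I)).
    by apply: contra notDy; apply: down_sub; exact: subset_trans (subsetIl _ _) (Min_sub I).
  have notDI : y \notin down (I :&: Inc (ceil I)).
    by apply: contra notDy; apply: down_sub; exact: subsetIl.
  by rewrite (negbTE notDM) (negbTE notDI) down_ceil_gap // orbT /= andbF.
have [Dy|Dy] := boolP (y \in down I); rewrite ?orbF /=; last by [].
have [DMy|DMy] /= := boolP (y \in down (Min I :&: down (ceil I))).
  have Cy : y \in down (ceil I).
    by case/downP: DMy => m; rewrite in_setI => /andP[_ Cm]; exact: down_le.
  by rewrite Cy.
have [//|Cy] /= := boolP (y \in down (ceil I)); rewrite orbF.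
case/downP: Dy => i Ii yi; apply/downP; exists i => //.
rewrite in_setI /Inc in_setC in_setU Ii negb_or /=; apply/andP; split.
  by apply: contra Cy => /down_le; apply.
by apply/upP => -[c Cc ci]; case/negP: (ceil_not_below_I Cc Ii).
Qed.

End RowImage.

Theorem theorem2p15 (d : Order.disp_t) (P : finPOrderType d)
    (s : seq P) (I : {set P}) :
  linext s -> interval_closed I ->
  Row s I =
    Inc I
    :|: (down (IncIn I (ceil I)) :\: (I :|: down (ceil I)))
    :|: (down (ceil I) :\: down (Min I :&: down (ceil I))).
Proof.
move=> ext_s convI; rewrite (row_image_formula convI).
exact: Row_toggle_rule ext_s convI (row_image_toggle_rule convI).
Qed.
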